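(* For a flat layout $L$, the following are equivalent: (1) $L$ is compact; (2) $\mathrm{coal}^\flat(L)$ is compact; (3) $\mathrm{squeeze}(L)$ is compact; (4) $\mathrm{sort}(L)$ is compact.
   Context: A flat layout $L=(s_1,\dots,s_m):(d_1,\dots,d_m)$ has positive integer shape entries and nonnegative integer stride entries, with modes $s_i:d_i$; $\mathrm{size}(L)=\prod s_i$, $\mathrm{cosize}(L)=1+\sum(s_i-1)d_i$. Layout function: $\Phi_L(x)=\sum x_id_i$ with $x_i=\lfloor x/(s_1\cdots s_{i-1})\rfloor\bmod s_i$ on $[0,\mathrm{size}(L))$. $L$ is compact if $\Phi_L:[0,\mathrm{size}(L))\to[0,\mathrm{cosize}(L))$ is a bijection. $\mathrm{squeeze}(L)$ removes modes with $s_i=1$. $\mathrm{coal}^\flat(L)$ is obtained from $\mathrm{squeeze}(L)$ by repeatedly replacing adjacent modes $s_i,s_{i+1}:d_i,d_{i+1}$ with $d_{i+1}=s_id_i$ by $s_is_{i+1}:d_i$. Order pairs by $s:d\preceq s':d'$ iff $d<d'$ or ($d=d'$ and $s\le s'$); $\mathrm{sort}(L)$ reorders the modes (stably) into $\preceq$-nondecreasing order. *)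

From mathcomp Require Import all_boot.
Set Implicit Arguments. Unset Strict Implicit. Unset Printing Implicit Defensive.

(* A flat layout (s_1,...,s_m):(d_1,...,d_m) is represented as the list of its
   modes [:: (s_1,d_1); ...; (s_m,d_m)] : seq (nat * nat)  (shape, stride). *)
Definition layout := seq (nat * nat).

Definition flat_layout (L : layout) : bool := all (fun p => 0 < p.1) L.

Definition shape (L : layout) : seq nat := map fst L.
Definition stride (L : layout) : seq nat := map snd L.

Definition lsize (L : layout) : nat := \prod_(p <- L) p.1.
Definition lcosize (L : layout) : nat := 1 + \sum_(p <- L) (p.1 - 1) * p.2.

Definition coord (L : layout) (x i : nat) : nat :=
  (x %/ \prod_(p <- take i L) p.1) %% (nth (1, 0) L i).1.

Definition layout_fun (L : layout) (x : nat) : nat :=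
  \sum_(i < size L) coord L x i * (nth (1, 0) L i).2.

Definition compact (L : layout) : Prop :=
  [/\ (forall x, x < lsize L -> layout_fun L x < lcosize L),
      (forall x y, x < lsize L -> y < lsize L ->
                   layout_fun L x = layout_fun L y -> x = y)
    & (forall z, z < lcosize L -> exists2 x, x < lsize L & layout_fun L x = z)].

Definition squeeze (L : layout) : layout := filter (fun p => p.1 != 1) L.

(* One left-to-right pass of merging: the accumulator (reversed) has its last
   mode at its head; a new mode (s',d') is merged into the previous (s,d)
   whenever d' = s * d, giving (s * s', d). *)
Definition coal_step (acc : layout) (p : nat * nat) : layout :=
  match acc with
  | q :: acc' => if p.2 == q.1 * q.2 then (q.1 * p.1, q.2) :: acc' else p :: acc
  | [::] => [:: p]
  end.

Definition coal_flat (L : layout) : layout :=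
  rev (foldl coal_step [::] (squeeze L)).

Definition mode_le (p q : nat * nat) : bool :=
  (p.2 < q.2) || ((p.2 == q.2) && (p.1 <= q.1)).

Definition lsort (L : layout) : layout := sort mode_le L.

(* Phi_L enumerates, with multiplicity, the offsets a_1 d_1 + ... + a_m d_m with
   0 <= a_i < s_i, so L is compact exactly when this multiset is
   {0, ..., cosize L - 1}.  The multiset and the cosize are both unchanged by
   permuting the modes, by dropping modes of shape 1, and by merging adjacent
   modes s:d and s':(s d) into (s s'):d, because a + s a' runs exactly once
   through [0, s s') as a < s and a' < s' vary.  The merge preserves the cosize
   only when s' > 0, which is where flatness is needed. *)

From mathcomp Require Import all_boot zify.

Set Implicit Arguments.
Unset Strict Implicit.
Unset Printing Implicit Defensive.

Lemma map_iota_muln_divmod (T : Type) (f : nat -> nat -> T) s n :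
  [seq f (x %% s) (x %/ s) | x <- iota 0 (s * n)] =
  [seq f a y | y <- iota 0 n, a <- iota 0 s].
Proof.
elim: n => [|n IHn]; first by rewrite muln0.
rewrite mulnS addnC iotaD map_cat IHn -addn1 iotaD allpairs_cat /= cats0.
have -> : iota (s * n) s = map (addn (s * n)) (iota 0 s) by rewrite -iotaDl addn0.
congr (_ ++ _); rewrite -map_comp.
apply/eq_in_map => a; rewrite mem_iota !add0n /= => lt_a_s.
have s_gt0 : 0 < s by apply: leq_ltn_trans lt_a_s.
by rewrite [s * n]mulnC modnMDl divnMDl // modn_small // divn_small // addn0.
Qed.

Lemma perm_allpairsC (S T R : eqType) (f : S -> T -> R) s t :
  perm_eq [seq f x y | x <- s, y <- t] [seq f x y | y <- t, x <- s].
Proof.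
elim: s => [|x s IHs] /=; first by elim: t.
rewrite perm_sym (perm_allpairs_consr (fun y x => f x y) t (fun=> x) (fun=> s)).
by rewrite perm_cat2l perm_sym.
Qed.

Lemma perm_map_iotaP (f : nat -> nat) n m :
  reflect [/\ (forall x, x < n -> f x < m),
              (forall x y, x < n -> y < n -> f x = f y -> x = y)
            & (forall z, z < m -> exists2 x, x < n & f x = z)]
          (perm_eq (map f (iota 0 n)) (iota 0 m)).
Proof.
apply: (iffP idP) => [fnm | [f_lt f_inj f_onto]].
  have mem_fn z : (z \in map f (iota 0 n)) = (z < m) by rewrite (perm_mem fnm) mem_iota.
  split.
  - by move=> x lt_xn; rewrite -mem_fn map_f // mem_iota.
  - by apply/mkseq_uniqP; rewrite /mkseq (perm_uniq fnm) iota_uniq.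
  - by move=> z; rewrite -mem_fn => /mapP[x]; rewrite mem_iota => /= lt_xn ->; exists x.
apply: uniq_perm; rewrite ?iota_uniq //.
  exact/mkseq_uniqP.
move=> z; rewrite mem_iota /=; apply/mapP/idP => [[x]|/f_onto[x lt_xn <-]].
  by rewrite mem_iota => /f_lt/[swap]->.
by exists x; rewrite ?mem_iota.
Qed.

Section FoldrPerm.

Variables (T U : eqType) (f : T -> seq U -> seq U).
Hypothesis perm_f : forall x A B, perm_eq A B -> perm_eq (f x A) (f x B).
Hypothesis fC : forall x y A, perm_eq (f x (f y A)) (f y (f x A)).

Lemma perm_foldr_base x A L : perm_eq (foldr f (f x A) L) (f x (foldr f A L)).
Proof. by elim: L => //= y L IHL; apply: perm_trans (fC _ _ _); apply: perm_f. Qed.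

Lemma perm_foldr A L L' : perm_eq L L' -> perm_eq (foldr f A L) (foldr f A L').
Proof.
elim: L L' => [|x L IHL] L'; first by rewrite perm_sym => /perm_nilP->.
move=> LL'; have x_L' : x \in L' by rewrite -(perm_mem LL') mem_head.
move: LL'; case/splitPr: x_L' => L1 L2.
rewrite perm_sym -cat1s perm_catCA /= perm_cons perm_sym => /IHL/(perm_f x).
move/perm_trans; apply; rewrite !foldr_cat perm_sym; exact: perm_foldr_base.
Qed.

End FoldrPerm.

Definition offset_step (p : nat * nat) (S : seq nat) : seq nat :=
  [seq a * p.2 + b | b <- S, a <- iota 0 p.1].

Definition layout_image (L : layout) : seq nat := foldr offset_step [:: 0] L.

Lemma offset_step_cons p b S :
  offset_step p (b :: S) = [seq a * p.2 + b | a <- iota 0 p.1] ++ offset_step p S.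
Proof. by []. Qed.

Lemma offset_step_cat p A B : offset_step p (A ++ B) = offset_step p A ++ offset_step p B.
Proof. exact: allpairs_cat. Qed.

Lemma layout_image_cat A B : layout_image (A ++ B) = foldr offset_step (layout_image B) A.
Proof. exact: foldr_cat. Qed.

Lemma layout_fun_cons s d L x :
  layout_fun ((s, d) :: L) x = x %% s * d + layout_fun L (x %/ s).
Proof.
rewrite /layout_fun big_ord_recl /coord big_nil divn1; congr (_ + _).
by apply: eq_bigr => i _; rewrite /coord big_cons divnMA.
Qed.

Lemma map_layout_fun_iota L :
  map (layout_fun L) (iota 0 (lsize L)) = layout_image L.
Proof.
elim: L => [|[s d] L IHL]; first by rewrite /lsize big_nil /= /layout_fun big_ord0.
rewrite /lsize big_cons -/(lsize L) (eq_map (layout_fun_cons s d L)).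
rewrite (map_iota_muln_divmod (fun a y => a * d + layout_fun L y)).
by rewrite /= -IHL /offset_step allpairs_mapl.
Qed.

Lemma compactP L : reflect (compact L) (perm_eq (layout_image L) (iota 0 (lcosize L))).
Proof. rewrite -map_layout_fun_iota; exact: perm_map_iotaP. Qed.

Lemma compact_transfer L L' :
  perm_eq (layout_image L) (layout_image L') -> lcosize L = lcosize L' ->
  compact L <-> compact L'.
Proof.
move=> image_LL' cosize_LL'.
split=> /compactP cL; apply/compactP.
  by rewrite -cosize_LL' -(permPl image_LL').
by rewrite cosize_LL' (permPl image_LL').
Qed.

Lemma perm_offset_step p A B : perm_eq A B -> perm_eq (offset_step p A) (offset_step p B).
Proof. by move=> AB; apply: perm_allpairs. Qed.

Lemma offset_stepC p q S :
  perm_eq (offset_step p (offset_step q S)) (offset_step q (offset_step p S)).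
Proof.
elim: S => // b S IHS; rewrite !offset_step_cons !offset_step_cat perm_cat //.
rewrite /offset_step !allpairs_mapl; apply: perm_trans (perm_allpairsC _ _ _) _.
by under eq_allpairs => x y do rewrite addnCA.
Qed.

Lemma perm_layout_image L L' : perm_eq L L' -> perm_eq (layout_image L) (layout_image L').
Proof. exact: perm_foldr perm_offset_step offset_stepC _ _ _. Qed.

Lemma lcosize_perm L L' : perm_eq L L' -> lcosize L = lcosize L'.
Proof. by move=> LL'; rewrite /lcosize (perm_big _ LL'). Qed.

Lemma offset_step_unit d S : offset_step (1, d) S = S.
Proof. by elim: S => //= b S IHS; rewrite -[in RHS]IHS. Qed.

Lemma layout_image_squeeze L : layout_image (squeeze L) = layout_image L.
Proof.
elim: L => // -[s d] L IHL /=.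
by case: eqP => [->|_]; rewrite /= IHL ?offset_step_unit.
Qed.

Lemma lcosize_squeeze L : lcosize (squeeze L) = lcosize L.
Proof.
rewrite /lcosize big_filter big_mkcond; congr (1 + _).
by apply: eq_bigr => -[s d] _ /=; case: eqP => [->|].
Qed.

Lemma flat_layout_squeeze L : flat_layout L -> flat_layout (squeeze L).
Proof. by move=> flatL; apply/allP => p; rewrite mem_filter => /andP[_ /(allP flatL)]. Qed.

Lemma offset_step_merge q p S : p.2 = q.1 * q.2 ->
  offset_step q (offset_step p S) = offset_step (q.1 * p.1, q.2) S.
Proof.
move=> p2E; elim: S => // b S IHS.
rewrite !offset_step_cons offset_step_cat IHS; congr (_ ++ _).
rewrite /offset_step allpairs_mapl /=.
rewrite -(map_iota_muln_divmod (fun a' a => a' * q.2 + (a * p.2 + b))).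
apply: eq_map => x; rewrite {3}(divn_eq x q.1) p2E; nia.
Qed.

Lemma layout_image_coal_step acc p t :
  layout_image (rev (coal_step acc p) ++ t) = layout_image (rev acc ++ p :: t).
Proof.
case: acc => [|q acc] //=; case: eqP => [p2E|_]; last by rewrite rev_cons cat_rcons.
rewrite !rev_cons -!cats1 -!catA !layout_image_cat /=.
by rewrite offset_step_merge.
Qed.

Lemma lcosize_coal_step acc p t : 0 < p.1 ->
  lcosize (rev (coal_step acc p) ++ t) = lcosize (rev acc ++ p :: t).
Proof.
case: acc => [|q acc] //= p1_gt0; case: eqP => [p2E|_]; last by rewrite rev_cons cat_rcons.
rewrite !rev_cons -!cats1 -!catA /lcosize !big_cat !big_cons big_nil /= p2E.
have merged_term : (q.1 * p.1 - 1) * q.2 = (q.1 - 1) * q.2 + (p.1 - 1) * (q.1 * q.2).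
  by case: q.1 => [|s]; rewrite ?mul0n //; case: p.1 p1_gt0 => // s' _; nia.
by rewrite merged_term !addn0 !addnA.
Qed.

Lemma layout_image_coal_flat L : layout_image (coal_flat L) = layout_image L.
Proof.
have coalE acc l : layout_image (rev (foldl coal_step acc l)) = layout_image (rev acc ++ l).
  by elim: l acc => [|p l IHl] acc /=; rewrite ?cats0 // IHl layout_image_coal_step.
by rewrite /coal_flat coalE layout_image_squeeze.
Qed.

Lemma lcosize_coal_flat L : flat_layout L -> lcosize (coal_flat L) = lcosize L.
Proof.
have coalE acc l : flat_layout l ->
    lcosize (rev (foldl coal_step acc l)) = lcosize (rev acc ++ l).
  elim: l acc => [|p l IHl] acc /=; first by rewrite cats0.
  by case/andP=> p1_gt0 /IHl->; rewrite lcosize_coal_step.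
by move=> flatL; rewrite /coal_flat coalE ?lcosize_squeeze ?flat_layout_squeeze.
Qed.

Theorem mainTheorem12 (L : layout) : flat_layout L ->
  [/\ (compact L <-> compact (coal_flat L)),
      (compact L <-> compact (squeeze L))
    & (compact L <-> compact (lsort L))].
Proof.
move=> flatL; split; apply: compact_transfer.
- by rewrite layout_image_coal_flat.
- by rewrite lcosize_coal_flat.
- by rewrite layout_image_squeeze.
- by rewrite lcosize_squeeze.
- by apply: perm_layout_image; rewrite perm_sym perm_sort.
- by apply: lcosize_perm; rewrite perm_sym perm_sort.
Qed.
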